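(* There exists an amicable orthogonal design $AOD\big(2^9;\ 2^6_{(8)};\ 2^6_{(8)}\big)$, i.e. a pair $(C;D)$ of $2^9\times2^9$ matrices, $C$ with entries in $\{0,\pm x_1,\ldots,\pm x_8\}$ and $D$ with entries in $\{0,\pm y_1,\ldots,\pm y_8\}$, such that $CC^{\rm T}=\big(2^6\sum_{i=1}^8x_i^2\big)I_{2^9}$, $DD^{\rm T}=\big(2^6\sum_{i=1}^8y_i^2\big)I_{2^9}$ and $CD^{\rm T}=DC^{\rm T}$.
   Context: The notation $u_{(k)}$ in a type means that $u$ is repeated $k$ times. $x_1,\ldots,x_8,y_1,\ldots,y_8$ are sixteen distinct commuting indeterminates. An amicable orthogonal design $AOD(m;c_1,\ldots,c_k;d_1,\ldots,d_\ell)$ is a pair $(X;Y)$ of $m\times m$ matrices with $X$ having entries in $\{0,\pm x_1,\ldots,\pm x_k\}$, $Y$ having entries in $\{0,\pm y_1,\ldots,\pm y_\ell\}$, $XX^{\rm T}=(\sum c_ix_i^2)I_m$, $YY^{\rm T}=(\sum d_iy_i^2)I_m$, and $XY^{\rm T}=YX^{\rm T}$. *)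

From HB Require Import structures.
From mathcomp Require Import all_boot all_order all_algebra.
Set Implicit Arguments. Unset Strict Implicit. Unset Printing Implicit Defensive.
Import GRing.Theory.
Local Open Scope ring_scope.

(* A formal entry of a design with variables x_1..x_k:
   None = 0,  Some (b, i) = (-1)^b * x_i. *)
Definition sentry (k : nat) := option (bool * 'I_k)%type.

Definition ev_entry (R : pzRingType) (k : nat) (x : 'I_k -> R) (e : sentry k) : R :=
  match e with
  | None => 0
  | Some (b, i) => (-1) ^+ b * x i
  end.

Definition ev_mx (R : pzRingType) (k m : nat) (x : 'I_k -> R) (A : 'M[sentry k]_m)
  : 'M[R]_m := map_mx (ev_entry x) A.

(* The matrix identities are required
   as polynomial identities in the commuting indeterminates x_i, y_j; this is
   expressed as: they hold after substituting arbitrary values from an arbitrary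
   commutative ring (taking the polynomial ring itself recovers the identity). *)
Definition AOD (m k l : nat) (c : 'I_k -> nat) (d : 'I_l -> nat)
  (X : 'M[sentry k]_m) (Y : 'M[sentry l]_m) : Prop :=
  forall (R : comNzRingType) (x : 'I_k -> R) (y : 'I_l -> R),
    let Xe := ev_mx x X in
    let Ye := ev_mx y Y in
    [/\ Xe *m Xe^T = (\sum_(i < k) (c i)%:R * x i ^+ 2)%:M,
        Ye *m Ye^T = (\sum_(j < l) (d j)%:R * y j ^+ 2)%:M
      & Xe *m Ye^T = Ye *m Xe^T].

From mathcomp Require Import all_boot all_algebra.
From mathcomp.real_closed Require Import mxtens.
Set Implicit Arguments. Unset Strict Implicit. Unset Printing Implicit Defensive.
Import GRing.Theory.
Local Open Scope ring_scope.

(* Writing C = sum_i x_i A_i and D = sum_j y_j B_j with {0, 1, -1}-matrices of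
   disjoint supports, the AOD identities become A_i A_i^T = 64 I,
   A_i A_j^T + A_j A_i^T = 0 for i != j, and A_i B_j^T = B_j A_i^T.  Every A_i and B_j
   is taken to be a Kronecker product of nine 2 x 2 matrices from an alphabet of eight.
   Since (X1 (x) X2) (Y1 (x) Y2)^T = X1 Y1^T (x) X2 Y2^T, a product whose factors
   X_p Y_p^T are each symmetric or skew-symmetric is skew-symmetric exactly when an
   odd number of them are; gram matrices multiply the factor weights (1 or 2), and
   supports are disjoint once they are in one factor.  What remains is a finite check
   on words of length nine, done by computation. *)

Section KroneckerPower.
Variables (R : comPzRingType) (d : nat).

(* [d ^ n], by recursion so that [kron_dim n.+1] is convertible to [d * kron_dim n]. *)
Fixpoint kron_dim n : nat := if n is n'.+1 then (d * kron_dim n')%N else 1%N.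

Fixpoint kronmx (A : nat -> 'M[R]_d) n : 'M[R]_(kron_dim n) :=
  if n is n'.+1 return 'M[R]_(kron_dim n) then A n' *t kronmx A n' else 1%:M.

Lemma scale_tensmx m n (a b : R) (M : 'M[R]_m) (N : 'M[R]_n) :
  (a *: M) *t (b *: N) = (a * b) *: (M *t N).
Proof. by apply/matrixP => i j; rewrite !mxE mulrACA. Qed.

Lemma scalar_tensmx m n (a b : R) :
  (a%:M : 'M[R]_m) *t (b%:M : 'M[R]_n) = (a * b)%:M.
Proof.
apply/matrixP => i j.
case: (mxtens_indexP i) => i1 i2; case: (mxtens_indexP j) => j1 j2.
rewrite tensmxE !mxE (can_eq (@mxtens_indexK _ _)) xpair_eqE.
by case: eqP; case: eqP; rewrite ?mulr1n ?mulr0n ?mulr0 ?mul0r.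
Qed.

Lemma kronmx_mul_tr (A B : nat -> 'M[R]_d) n :
  kronmx A n *m (kronmx B n)^T = kronmx (fun p => A p *m (B p)^T) n.
Proof.
elim: n => [|n IHn] /=; first by rewrite tr_scalar_mx mul_scalar_mx scale1r.
by rewrite trmx_tens tensmx_mul IHn.
Qed.

Lemma tr_kronmx (A : nat -> 'M[R]_d) (s : pred nat) n :
  (forall p, (p < n)%N -> (A p)^T = (-1) ^+ s p *: A p) ->
  (kronmx A n)^T = (-1) ^+ count s (iota 0 n) *: kronmx A n.
Proof.
elim: n => [|n IHn] As; first by rewrite /= tr_scalar_mx scale1r.
have -> : iota 0 n.+1 = iota 0 n ++ [:: n] by rewrite -addn1 iotaD.
rewrite /= trmx_tens As // IHn => [|p /ltnW]; last exact: As.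
by rewrite scale_tensmx -exprD count_cat /= addn0 addnC.
Qed.

Lemma kronmx_scalar (A : nat -> 'M[R]_d) (c : nat -> R) n :
  (forall p, (p < n)%N -> A p = (c p)%:M) -> kronmx A n = (\prod_(p < n) c p)%:M.
Proof.
elim: n => [|n IHn] Ac /=; first by rewrite big_ord0.
rewrite Ac // IHn => [|p /ltnW]; last exact: Ac.
by rewrite scalar_tensmx big_ord_recr mulrC.
Qed.

Lemma kronmx_entry_in (pT : predType R) (S : pT) (A : nat -> 'M[R]_d) n :
  0 \in S -> 1 \in S -> {in S &, forall a b, a * b \in S} ->
  (forall p, (p < n)%N -> forall i j, A p i j \in S) ->
  forall i j, kronmx A n i j \in S.
Proof.
move=> S0 S1 SM; elim: n => [|n IHn] SA i j /=.
  by rewrite mxE; case: eqP.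
case: (mxtens_indexP i) => i1 i2; case: (mxtens_indexP j) => j1 j2.
rewrite tensmxE SM ?SA //; apply: IHn => p /ltnW; exact: SA.
Qed.

Lemma kronmx_disjoint (A B : nat -> 'M[R]_d) n p : (p < n)%N ->
  (forall i j, A p i j * B p i j = 0) ->
  forall i j, kronmx A n i j * kronmx B n i j = 0.
Proof.
elim: n => // n IHn p_lt disjAB i j /=.
case: (mxtens_indexP i) => i1 i2; case: (mxtens_indexP j) => j1 j2.
rewrite !tensmxE mulrACA.
have [p_lt_n | p_ge_n] := ltnP p n; first by rewrite IHn // mulr0.
have /eqP p_eq_n : p == n by rewrite eqn_leq p_ge_n -ltnS p_lt.
by move: disjAB; rewrite p_eq_n => ->; rewrite mul0r.
Qed.

End KroneckerPower.

Lemma sum_offdiag_cancel (V : zmodType) n (F : 'I_n -> 'I_n -> V) :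
  (forall i j, i != j -> F i j + F j i = 0) ->
  \sum_i \sum_j F i j = \sum_i F i i.
Proof.
elim: n F => [|n IHn] F skewF; first by rewrite !big_ord0.
rewrite !big_ord_recr /=; under eq_bigr => i _ do rewrite big_ord_recr /=.
rewrite big_split /= IHn => [|i j ij]; last by apply: skewF; rewrite -val_eqE /= val_eqE.
rewrite -!addrA; congr (_ + _); rewrite addrA -big_split big1 ?add0r // => i _.
by apply: skewF; rewrite -val_eqE /= neq_ltn ltn_ord.
Qed.

Section Designs.
Variables (k m : nat).

Definition design (M : 'I_k -> 'M[int]_m) : 'M[sentry k]_m :=
  \matrix_(r, s) if [pick i | M i r s != 0] is Some i then Some (M i r s == -1, i)
                 else None.

Definition OD_family (c : 'I_k -> nat) (M : 'I_k -> 'M[int]_m) : Prop :=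
  [/\ forall i, M i *m (M i)^T = (c i)%:R%:M,
      forall i j, i != j -> M i *m (M j)^T + M j *m (M i)^T = 0,
      forall i r s, M i r s \in [:: 0; 1; -1]
    & forall i j, i != j -> forall r s, M i r s * M j r s = 0].

Lemma ev_design (R : pzRingType) (M : 'I_k -> 'M[int]_m) (x : 'I_k -> R) :
  (forall i r s, M i r s \in [:: 0; 1; -1]) ->
  (forall i j, i != j -> forall r s, M i r s * M j r s = 0) ->
  ev_mx x (design M) = \sum_i x i *: map_mx intr (M i).
Proof.
move=> entM disjM; apply/matrixP => r s; rewrite !mxE summxE.
case: pickP => [i Mi_neq0 | M_eq0] /=; last first.
  by rewrite big1 // => i _; rewrite !mxE (eqP (negbFE (M_eq0 i))) mulr0.
rewrite (bigD1 i) //= big1 ?addr0 => [|j ji]; last first.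
  have /eqP := disjM _ _ ji r s.
  by rewrite mulf_eq0 (negPf Mi_neq0) orbF => /eqP Mj0; rewrite !mxE Mj0 mulr0.
move: (entM i r s) Mi_neq0; rewrite !inE !mxE.
by case/or3P => /eqP ->; rewrite /= ?expr0 ?mul1r ?mulr1 ?mulN1r ?mulrN1.
Qed.

Lemma lincomb_mul_tr (R : comPzRingType) l (x : 'I_k -> R) (y : 'I_l -> R)
    (M : 'I_k -> 'M[int]_m) (P : 'I_l -> 'M[int]_m) :
  (\sum_i x i *: map_mx intr (M i)) *m (\sum_j y j *: map_mx intr (P j))^T =
  \sum_i \sum_j (x i * y j) *: map_mx intr (M i *m (P j)^T).
Proof.
rewrite linear_sum mulmx_suml; apply: eq_bigr => i _.
rewrite mulmx_sumr; apply: eq_bigr => j _.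
by rewrite linearZ /= -scalemxAl -scalemxAr scalerA map_mxM map_trmx.
Qed.

Lemma design_gram (R : comPzRingType) c (M : 'I_k -> 'M[int]_m) (x : 'I_k -> R) :
  OD_family c M ->
  ev_mx x (design M) *m (ev_mx x (design M))^T = (\sum_i (c i)%:R * x i ^+ 2)%:M.
Proof.
case=> gramM antiM entM disjM; rewrite ev_design // lincomb_mul_tr.
rewrite sum_offdiag_cancel => [|i j ij]; last first.
  by rewrite mulrC -scalerDr -raddfD /= antiM // map_mx0 scaler0.
rewrite raddf_sum; apply: eq_bigr => i _.
by rewrite gramM map_scalar_mx scale_scalar_mx rmorph_nat mulrC expr2.
Qed.

End Designs.

Theorem AOD_design m k l (c : 'I_k -> nat) (d : 'I_l -> nat)
    (M : 'I_k -> 'M[int]_m) (P : 'I_l -> 'M[int]_m) :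
  OD_family c M -> OD_family d P ->
  (forall i j, M i *m (P j)^T = P j *m (M i)^T) ->
  AOD c d (design M) (design P).
Proof.
move=> odM odP amicMP R x y; split; [exact: design_gram | exact: design_gram |].
case: odM odP => _ _ entM disjM [_ _ entP disjP].
rewrite !ev_design // !lincomb_mul_tr exchange_big /=.
by apply: eq_bigr => i _; apply: eq_bigr => j _; rewrite amicMP mulrC.
Qed.

(* [(a, b, c, d)] encodes [[a, b], [c, d]]; unlike products in ['M_2], which are
   locked big sums, operations on quads evaluate under [vm_compute]. *)
Definition quad := (int * int * int * int)%type.

Definition mxq (q : quad) : 'M[int]_2 :=
  let: (a, b, c, d) := q in
  \matrix_(i, j) if i == ord0 then if j == ord0 then a else b
                 else if j == ord0 then c else d.

Definition trq (q : quad) : quad := let: (a, b, c, d) := q in (a, c, b, d).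

Definition oppq (q : quad) : quad := let: (a, b, c, d) := q in (- a, - b, - c, - d).

Definition mulq_tr (u v : quad) : quad :=
  let: (a, b, c, d) := u in let: (a', b', c', d') := v in
  (a * a' + b * b', a * c' + b * d', c * a' + d * b', c * c' + d * d').

Definition normq (q : quad) : int := let: (a, b, _, _) := q in a * a + b * b.

Definition entries (q : quad) : seq int := let: (a, b, c, d) := q in [:: a; b; c; d].

Lemma ord2_ind (P : 'I_2 -> Prop) : P ord0 -> P ord_max -> forall i, P i.
Proof.
move=> P0 P1 [[|[|//]] lt_i_2].
  by rewrite (_ : Ordinal _ = ord0) //; apply: val_inj.
by rewrite (_ : Ordinal _ = ord_max) //; apply: val_inj.
Qed.

Lemma mxq_mul_tr u v : mxq u *m (mxq v)^T = mxq (mulq_tr u v).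
Proof.
case: u v => [[[a b] c d]] [[[a' b'] c' d']]; apply/matrixP.
by apply: ord2_ind; apply: ord2_ind; rewrite !mxE big_ord_recr big_ord1 !mxE.
Qed.

Lemma trmx_mxq q : (mxq q)^T = mxq (trq q).
Proof.
by case: q => [[[a b] c d]]; apply/matrixP; apply: ord2_ind; apply: ord2_ind; rewrite !mxE.
Qed.

Lemma mxq_opp q : mxq (oppq q) = - mxq q.
Proof.
by case: q => [[[a b] c d]]; apply/matrixP; apply: ord2_ind; apply: ord2_ind; rewrite !mxE.
Qed.

Lemma mxq_scalar a : mxq (a, 0, 0, a) = a%:M.
Proof. by apply/matrixP; apply: ord2_ind; apply: ord2_ind; rewrite !mxE. Qed.

Lemma mxq_entry_in q i j : mxq q i j \in entries q.
Proof.
case: q => [[[a b] c d]]; move: i j.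
by apply: ord2_ind; apply: ord2_ind; rewrite !mxE !inE eqxx ?orbT.
Qed.

Definition sym_sign (q : quad) : option bool :=
  if trq q == q then Some false else if trq q == oppq q then Some true else None.

Lemma sym_signP q b : sym_sign q = Some b -> (mxq q)^T = (-1) ^+ b *: mxq q.
Proof.
rewrite /sym_sign trmx_mxq; case: ifP => [/eqP -> [<-] | _]; first by rewrite scale1r.
by case: ifP => // /eqP -> [<-]; rewrite mxq_opp scaleN1r.
Qed.

Definition disjointq (u v : quad) : bool :=
  all2 (fun a b => a * b == 0) (entries u) (entries v).

Lemma disjointqP u v : disjointq u v -> forall i j, mxq u i j * mxq v i j = 0.
Proof.
case: u v => [[[a b] c d]] [[[a' b'] c' d']] /and5P[/eqP ? /eqP ? /eqP ? /eqP ? _].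
by apply: ord2_ind; apply: ord2_ind; rewrite !mxE.
Qed.

Definition alphabet : seq quad :=
  [:: (1, 0, 0, 1); (1, 0, 0, -1); (0, 1, 1, 0); (0, 1, -1, 0);
      (1, 1, 1, -1); (1, 1, -1, 1); (1, -1, 1, 1); (-1, 1, 1, 1)].

Lemma alphabet_gram :
  {in (0, 0, 0, 0) :: alphabet, forall q, mulq_tr q q == (normq q, 0, 0, normq q)}.
Proof. exact/allP. Qed.

Lemma alphabet_entries :
  {in (0, 0, 0, 0) :: alphabet, forall q, all (mem [:: 0; 1; -1]) (entries q)}.
Proof. exact/allP. Qed.

Lemma sign_entry_mul : {in [:: 0; 1; -1] &, forall a b : int, a * b \in [:: 0; 1; -1]}.
Proof. by move=> a b; rewrite !inE => /or3P[]/eqP-> /or3P[]/eqP->. Qed.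

Section Words.
Variable n : nat.

(* A word lists alphabet indices; out-of-range letters stand for the zero matrix. *)
Definition factor (w : seq nat) p : quad := nth (0, 0, 0, 0) alphabet (nth 0%N w p).

Definition word_mx (w : seq nat) : 'M[int]_(kron_dim 2 n) := kronmx (mxq \o factor w) n.

Definition word_sign u v : option bool :=
  let signs := [seq sym_sign (mulq_tr (factor u p) (factor v p)) | p <- iota 0 n] in
  if all isSome signs then Some (odd (count (odflt false) signs)) else None.

Definition word_weight w : int := foldr *%R 1 [seq normq (factor w p) | p <- iota 0 n].

Definition word_disjoint u v : bool :=
  has (fun p => disjointq (factor u p) (factor v p)) (iota 0 n).

Lemma factor_in w p : factor w p \in (0, 0, 0, 0) :: alphabet.
Proof.
rewrite /factor inE.
have [/(mem_nth (0, 0, 0, 0)) -> | ?] := ltnP (nth 0%N w p) (size alphabet).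
  by rewrite orbT.
by rewrite nth_default.
Qed.

Lemma factor_gram w p :
  mxq (factor w p) *m (mxq (factor w p))^T = (normq (factor w p))%:M.
Proof. by rewrite mxq_mul_tr -mxq_scalar (eqP (alphabet_gram (factor_in w p))). Qed.

Lemma word_mx_entry w i j : word_mx w i j \in [:: 0; 1; -1].
Proof.
apply: (kronmx_entry_in _ _ sign_entry_mul) => // p _ r s.
exact: (allP (alphabet_entries (factor_in w p))) _ (mxq_entry_in _ r s).
Qed.

Lemma word_mx_gram w : word_mx w *m (word_mx w)^T = (word_weight w)%:M.
Proof.
rewrite kronmx_mul_tr (@kronmx_scalar _ _ _ (normq \o factor w)) => [|p _].
  by rewrite /word_weight foldrE big_map; congr _%:M; rewrite -[in RHS](subn0 n) big_mkord.
exact: factor_gram.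
Qed.

Lemma word_signP u v b : word_sign u v = Some b ->
  (word_mx u *m (word_mx v)^T)^T = (-1) ^+ b *: (word_mx u *m (word_mx v)^T).
Proof.
rewrite /word_sign; case: ifP => // /allP signs_def [<-].
rewrite signr_odd count_map kronmx_mul_tr; apply: tr_kronmx => p lt_pn /=.
rewrite mxq_mul_tr; apply: sym_signP.
have /signs_def : sym_sign (mulq_tr (factor u p) (factor v p)) \in
    [seq sym_sign (mulq_tr (factor u p) (factor v p)) | p <- iota 0 n].
  by apply: (map_f (fun p => sym_sign _)); rewrite mem_iota.
by case: sym_sign.
Qed.

Lemma word_mx_disjoint u v : word_disjoint u v ->
  forall i j, word_mx u i j * word_mx v i j = 0.
Proof.
case/hasP => p; rewrite mem_iota => /= lt_pn /disjointqP.
exact: kronmx_disjoint.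
Qed.

Definition word_family (ws : seq (seq nat)) :
  'I_(size ws) -> 'M[int]_(kron_dim 2 n) := fun i => word_mx (nth [::] ws i).
#[global] Arguments word_family : clear implicits.

Definition OD_words (c : nat) (ws : seq (seq nat)) : bool :=
  [&& uniq ws, all (fun u => word_weight u == c%:R) ws &
      all (fun u => all (fun v =>
        (u == v) || (word_sign u v == Some true) && word_disjoint u v) ws) ws].

Definition amicable_words (us vs : seq (seq nat)) : bool :=
  all (fun u => all (fun v => word_sign u v == Some false) vs) us.

Lemma OD_wordsP c ws : OD_words c ws -> OD_family (fun _ => c) (word_family ws).
Proof.
case/and3P => uniq_ws /allP weights /allP pairs.
have offdiag (i j : 'I_(size ws)) : i != j ->
    (word_sign (nth [::] ws i) (nth [::] ws j) == Some true) &&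
    word_disjoint (nth [::] ws i) (nth [::] ws j).
  rewrite -val_eqE -(nth_uniq [::] _ _ uniq_ws) ?ltn_ord // => /negPf ij.
  have /allP := pairs _ (mem_nth [::] (ltn_ord i)).
  by move/(_ _ (mem_nth [::] (ltn_ord j))); rewrite ij.
split=> [i | i j /offdiag/andP[/eqP sign_ij _] | i r s
          | i j /offdiag/andP[_ /word_mx_disjoint]] //.
- by rewrite /word_family word_mx_gram (eqP (weights _ (mem_nth [::] (ltn_ord i)))).
- move/word_signP: sign_ij; rewrite trmx_mul trmxK expr1 scaleN1r /word_family => ->.
  exact: addrN.
- exact: word_mx_entry.
Qed.

Lemma amicable_wordsP us vs : amicable_words us vs ->
  forall i j,
    word_family us i *m (word_family vs j)^T = word_family vs j *m (word_family us i)^T.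
Proof.
move=> /allP amic i j; have /allP := amic _ (mem_nth [::] (ltn_ord i)).
move=> /(_ _ (mem_nth [::] (ltn_ord j))) /eqP/word_signP.
by rewrite trmx_mul trmxK expr0 scale1r => <-.
Qed.

End Words.

Definition words_C : seq (seq nat) :=
  [:: [:: 0; 0; 0; 4; 4; 4; 4; 4; 4]; [:: 0; 0; 2; 4; 4; 4; 4; 4; 7];
      [:: 0; 2; 0; 4; 4; 4; 4; 7; 5]; [:: 0; 2; 2; 4; 4; 4; 5; 7; 6];
      [:: 2; 0; 0; 4; 4; 4; 6; 7; 6]; [:: 2; 0; 2; 4; 4; 4; 7; 4; 6];
      [:: 2; 2; 0; 4; 4; 4; 7; 5; 5]; [:: 2; 2; 2; 4; 4; 5; 7; 6; 5]]%N.

Definition words_D : seq (seq nat) :=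
  [:: [:: 0; 0; 0; 4; 4; 7; 7; 6; 5]; [:: 0; 0; 2; 4; 7; 6; 7; 6; 5];
      [:: 0; 2; 0; 7; 5; 6; 7; 6; 5]; [:: 0; 2; 3; 5; 4; 7; 6; 7; 7];
      [:: 2; 0; 0; 7; 6; 6; 7; 6; 5]; [:: 2; 0; 3; 6; 4; 7; 6; 7; 7];
      [:: 2; 2; 1; 4; 7; 7; 6; 7; 7]; [:: 2; 2; 3; 7; 7; 7; 6; 7; 7]]%N.

Lemma OD_words_C : OD_words 9 (2 ^ 6) words_C. Proof. by vm_compute. Qed.
Lemma OD_words_D : OD_words 9 (2 ^ 6) words_D. Proof. by vm_compute. Qed.
Lemma amicable_words_CD : amicable_words 9 words_C words_D. Proof. by vm_compute. Qed.

Local Close Scope ring_scope.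

Theorem lemma5p2 :
  exists (C : 'M[sentry 8]_(2 ^ 9)) (D : 'M[sentry 8]_(2 ^ 9)),
    AOD (fun _ => 2 ^ 6) (fun _ => 2 ^ 6) C D.
Proof.
exists (design (word_family 9 words_C)), (design (word_family 9 words_D)).
apply: AOD_design.
- exact: OD_wordsP OD_words_C.
- exact: OD_wordsP OD_words_D.
- exact: amicable_wordsP amicable_words_CD.
Qed.
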